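(* For every integer $k\ge1$, $$(\widetilde{\mathbb P}_k)^3=\widetilde{\mathbb S}^*_k\oplus\widetilde{\mathbb I}^*_k\oplus\widetilde{\mathbb H}_k,$$ i.e. every $\mathbf V\in(\widetilde{\mathbb P}_k)^3$ can be written uniquely as $\mathbf V=\mathbf F+\mathbf G+\mathbf H$ with $(\mathbf F,\mathbf G,\mathbf H)\in\widetilde{\mathbb S}^*_k\times\widetilde{\mathbb I}^*_k\times\widetilde{\mathbb H}_k$. Moreover $(\widetilde{\mathbb P}_0)^3=\widetilde{\mathbb H}_0$.
   Context: $\widetilde{\mathbb P}_l$ denotes the space of real homogeneous polynomials of degree $l$ in three variables. For $k\ge1$, $\widetilde{\mathbb S}_k=\{\mathbf\Phi\in(\widetilde{\mathbb P}_k)^3:\nabla\cdot\mathbf\Phi=0\}$, $\widetilde{\mathbb I}_k=\{\mathbf\Phi\in(\widetilde{\mathbb P}_k)^3:\nabla\times\mathbf\Phi=0\}$, $\widetilde{\mathbb H}_k=\widetilde{\mathbb S}_k\cap\widetilde{\mathbb I}_k$, and $\widetilde{\mathbb H}_0=(\widetilde{\mathbb P}_0)^3$. $\widetilde{\mathbb S}^*_k$ and $\widetilde{\mathbb I}^*_k$ denote (arbitrary but fixed) complements of $\widetilde{\mathbb H}_k$ in $\widetilde{\mathbb S}_k$ and in $\widetilde{\mathbb I}_k$ respectively, i.e. $\widetilde{\mathbb S}_k=\widetilde{\mathbb S}^*_k\oplus\widetilde{\mathbb H}_k$ and $\widetilde{\mathbb I}_k=\widetilde{\mathbb I}^*_k\oplus\widetilde{\mathbb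 H}_k$. *)

From HB Require Import structures.
From mathcomp Require Import all_boot all_order all_algebra.
From mathcomp Require Import mpoly.
Set Implicit Arguments. Unset Strict Implicit. Unset Printing Implicit Defensive.
Import GRing.Theory.
Local Open Scope ring_scope.

Definition VF (R : realFieldType) := {ffun 'I_3 -> {mpoly R[3]}}.

Definition Pt (R : realFieldType) (k : nat) (V : VF R) : Prop :=
  forall i : 'I_3, V i \is k.-homog.

Definition divF (R : realFieldType) (V : VF R) : {mpoly R[3]} :=
  \sum_(i < 3) mderiv i (V i).

Definition curlF (R : realFieldType) (V : VF R) : VF R :=
  [ffun i : 'I_3 => let j := ordS i in let l := ordS j in
     mderiv j (V l) - mderiv l (V j)].

Definition St (R : realFieldType) (k : nat) (V : VF R) : Prop :=
  Pt k V /\ divF V = 0.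
Definition It (R : realFieldType) (k : nat) (V : VF R) : Prop :=
  Pt k V /\ curlF V = 0.
Definition Ht (R : realFieldType) (k : nat) (V : VF R) : Prop :=
  St k V /\ It k V.

Definition is_subspace (R : realFieldType) (A : VF R -> Prop) : Prop :=
  A 0 /\ forall (a : R) (u v : VF R), A u -> A v -> A (a *: u + v).

(* C is a complement of the subspace H inside the space S: S = C (+) H *)
Definition is_complement (R : realFieldType) (C H S : VF R -> Prop) : Prop :=
  [/\ is_subspace C,
      (forall v, C v -> S v),
      (forall v, C v -> H v -> v = 0) &
      (forall v, S v -> exists c h, [/\ C c, H h & v = c + h])].

From HB Require Import structures.
From mathcomp Require Import all_boot all_order all_algebra.
From mathcomp Require Import mpoly.
From mathcomp Require Import zify.
Set Implicit Arguments. Unset Strict Implicit. Unset Printing Implicit Defensive.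
Import GRing.Theory Num.Theory.
Local Open Scope ring_scope.

(* The divergence of V ∈ (P_k)^3 lies in P_{k-1}, and the Laplacian maps P_{k+1}
   onto P_{k-1}; so div V = Δφ for some φ ∈ P_{k+1}, and V = (V - ∇φ) + ∇φ splits
   V into a divergence-free and a curl-free field.  Since H_k = S_k ∩ I_k, the
   sum S_k + I_k = (P_k)^3 refines to the direct sum S*_k ⊕ I*_k ⊕ H_k by linear
   algebra.  In degree 0 all derivatives vanish. *)

Section HomogeneousDerivatives.
Variables (R : nzRingType) (n : nat).
Implicit Types (p : {mpoly R[n]}) (i : 'I_n).

Lemma dhomog_mderiv d i p : p \is d.-homog -> p^`M(i) \is d.-1.-homog.
Proof.
move=> /dhomogP hp; apply/dhomogP => m; rewrite mcoeff_msupp mcoeff_mderiv => nz.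
have p_m : (m + U_(i))%MM \in msupp p.
  by rewrite mcoeff_msupp; apply: contraNneq nz => ->; rewrite mul0rn.
have deg_m : mdeg (m + U_(i))%MM = d := hp _ p_m.
by rewrite -deg_m mdegD mdeg1 addn1.
Qed.

Lemma mderiv_dhomog0 i p : p \is 0.-homog -> p^`M(i) = 0.
Proof.
move=> hp; apply/mpolyP => m.
rewrite mcoeff_mderiv mcoeff0 (dhomog_nemf_coeff hp) ?mul0rn //.
by change (mdeg (m + U_(i))%MM != 0%N); rewrite mdegD mdeg1 addn1.
Qed.

End HomogeneousDerivatives.

Section Laplacian.
Variables (R : numFieldType) (n : nat).
Implicit Types (p q : {mpoly R[n]}) (m : 'X_{1..n}).

Definition mlaplacian p : {mpoly R[n]} := \sum_(i < n) p^`M(i, 2).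

Lemma mlaplacian_is_linear : linear mlaplacian.
Proof.
move=> c p q; rewrite /mlaplacian scaler_sumr -big_split /=.
by apply: eq_bigr => i _; rewrite linearP.
Qed.

HB.instance Definition _ :=
  GRing.isLinear.Build R {mpoly R[n]} {mpoly R[n]} _ mlaplacian mlaplacian_is_linear.

Lemma mlaplacianE p : mlaplacian p = \sum_(i < n) p^`M(i)^`M(i).
Proof. by apply: eq_bigr => i _; rewrite mderivSn nderivn1. Qed.

Lemma mlaplacianX m :
  mlaplacian 'X_[m] = \sum_(i < n) ((m i)^_2)%:R *: 'X_[m - U_(i) *+ 2].
Proof. by apply: eq_bigr => i _; rewrite mderivnX. Qed.

Definition mlaplacian_range d q :=
  exists2 phi, phi \is d.+2.-homog & mlaplacian phi = q.

Lemma mlaplacian_range0 d : mlaplacian_range d 0.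
Proof. by exists 0; rewrite ?dhomog0 ?linear0. Qed.

Lemma mlaplacian_rangeD d p q :
  mlaplacian_range d p -> mlaplacian_range d q -> mlaplacian_range d (p + q).
Proof.
by move=> [phi hphi <-] [psi hpsi <-]; exists (phi + psi); rewrite ?rpredD ?linearD.
Qed.

Lemma mlaplacian_rangeZ d c p : mlaplacian_range d p -> mlaplacian_range d (c *: p).
Proof. by move=> [phi hphi <-]; exists (c *: phi); rewrite ?rpredZ ?linearZ. Qed.

End Laplacian.

Section LaplacianOnto.
Variables (R : numFieldType) (n : nat).

(* Δ x^(m + 2 e_0) is a nonzero multiple of x^m plus monomials of the same degree
   whose exponents off the variable 0 sum to less, which is the induction measure. *)
Lemma mlaplacian_rangeX (m : 'X_{1..n.+1}) :
  mlaplacian_range (mdeg m) ('X_[m] : {mpoly R[n.+1]}).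
Proof.
have [N] := ubnP (mdeg m - m ord0)%N; elim: N m => // N IH m lt_mN.
set a := (m + U_(ord0) *+ 2)%MM.
have deg_a : mdeg a = (mdeg m).+2 by rewrite mdegD mdegMn mdeg1 addn2.
have a0 : a ord0 = (m ord0).+2 by rewrite mnmDE mulmnE mnm1E eqxx addn2.
set c : R := ((a ord0)^_2)%:R.
have [psi psi_homog lap_psi] :
    mlaplacian_range (mdeg m) (mlaplacian 'X_[a] - c *: 'X_[m]).
  rewrite mlaplacianX (bigD1 ord0) //= addmK addrAC subrr add0r.
  apply: big_ind => [||i i_neq0]; [exact: mlaplacian_range0 | exact: mlaplacian_rangeD|].
  have [lt_ai2|le2_ai] := ltnP (a i) 2.
    by rewrite ffact_small // scale0r; exact: mlaplacian_range0.
  apply: mlaplacian_rangeZ; set b := (a - U_(i) *+ 2)%MM.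
  have bK : (b + U_(i) *+ 2)%MM = a.
    by apply: submK; apply/mnm_lepP => j; rewrite mulmnE mnm1E; case: eqP => [<-|]; lia.
  have deg_b : mdeg b = mdeg m.
    by apply/succn_inj/succn_inj; rewrite -deg_a -bK mdegD mdegMn mdeg1 addn2.
  have b0 : b ord0 = (m ord0).+2 by rewrite mnmBE mulmnE mnm1E (negbTE i_neq0) a0.
  have le_b0 : (b ord0 <= mdeg b)%N by rewrite mdegE (bigD1 ord0) //= leq_addr.
  by rewrite -deg_b; apply: IH; lia.
have c_neq0 : c != 0 by rewrite pnatr_eq0 -lt0n ffact_gt0 a0.
exists (c^-1 *: ('X_[a] - psi)); first by rewrite rpredZ // rpredB // dhomogX; apply/eqP.
by rewrite linearZ linearB /= lap_psi subKr scalerA mulVf // scale1r.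
Qed.

Lemma mlaplacian_onto d (q : {mpoly R[n.+1]}) : q \is d.-homog -> mlaplacian_range d q.
Proof.
move=> /dhomogP q_homog; rewrite [q]mpolyE big_seq.
apply: big_ind => [||m m_supp]; [exact: mlaplacian_range0 | exact: mlaplacian_rangeD|].
by apply: mlaplacian_rangeZ; rewrite -(q_homog m m_supp); exact: mlaplacian_rangeX.
Qed.

End LaplacianOnto.

Section Subspaces.
Variable R : realFieldType.
Implicit Types (A B : VF R -> Prop) (u v : VF R).

Lemma subspaceD A u v : is_subspace A -> A u -> A v -> A (u + v).
Proof. by move=> [_ A_lin] Au Av; rewrite -[u]scale1r; apply: A_lin. Qed.

Lemma subspaceN A u : is_subspace A -> A u -> A (- u).
Proof. by move=> [A0 A_lin] Au; rewrite -scaleN1r -[_ *: u]addr0; apply: A_lin. Qed.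

Lemma subspaceB A u v : is_subspace A -> A u -> A v -> A (u - v).
Proof. by move=> A_sub Au Av; apply: subspaceD => //; apply: subspaceN. Qed.

Lemma is_subspaceI A B :
  is_subspace A -> is_subspace B -> is_subspace (fun v => A v /\ B v).
Proof.
move=> [A0 A_lin] [B0 B_lin]; split=> // a u v [Au Bu] [Av Bv].
by split; [apply: A_lin | apply: B_lin].
Qed.

Lemma is_subspace_ker A (W : lmodType R) (f : {linear VF R -> W}) :
  is_subspace A -> is_subspace (fun v => A v /\ f v = 0).
Proof.
move=> [A0 A_lin]; split=> [|a u v [Au fu] [Av fv]]; first by rewrite linear0.
by rewrite linearP fu fv scaler0 addr0; split; first exact: A_lin.
Qed.

End Subspaces.

Section DirectSum.
Variables (R : realFieldType) (S I Sc Ic : VF R -> Prop).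
Hypotheses (S_sub : is_subspace S) (I_sub : is_subspace I).
Hypothesis Sc_compl : is_complement Sc (fun v => S v /\ I v) S.
Hypothesis Ic_compl : is_complement Ic (fun v => S v /\ I v) I.

Lemma complement_sum3_eq0 F G H : Sc F -> Ic G -> S H /\ I H ->
  F + G + H = 0 -> [/\ F = 0, G = 0 & H = 0].
Proof.
case: Sc_compl => _ ScS Sc_H _; case: Ic_compl => _ IcI Ic_H _.
move=> ScF IcG [SH IH] sum0.
have G0 : G = 0.
  have eG : G = - (F + H) by apply/eqP; rewrite -addr_eq0 addrCA addrA sum0.
  apply: Ic_H => //; split; last exact: IcI.
  by rewrite eG; apply: subspaceN => //; apply: subspaceD => //; apply: ScS.
rewrite G0 addr0 in sum0.
have F0 : F = 0.
  have eF : F = - H by apply/eqP; rewrite -addr_eq0 sum0.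
  by apply: Sc_H => //; rewrite eF; split; apply: subspaceN.
by split=> //; move: sum0; rewrite F0 add0r.
Qed.

Lemma complement_sum3 V s i : S s -> I i -> V = s + i ->
  exists F G H : VF R,
    [/\ Sc F, Ic G, S H /\ I H, V = F + G + H &
      forall F' G' H' : VF R, Sc F' -> Ic G' -> S H' /\ I H' ->
        V = F' + G' + H' -> [/\ F' = F, G' = G & H' = H]].
Proof.
have H_sub := is_subspaceI S_sub I_sub.
case: Sc_compl => Sc_sub _ _ Sc_dec; case: Ic_compl => Ic_sub _ _ Ic_dec.
move=> Ss Ii ->.
have [F [H1 [ScF H1_in ->]]] := Sc_dec s Ss.
have [G [H2 [IcG H2_in ->]]] := Ic_dec i Ii.
exists F, G, (H1 + H2); split=> //; first exact: subspaceD H_sub H1_in H2_in.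
  by rewrite addrACA.
move=> F' G' H' ScF' IcG' HH' eq_sum.
have [] := @complement_sum3_eq0 (F' - F) (G' - G) (H' - (H1 + H2)).
- exact: subspaceB Sc_sub ScF' ScF.
- exact: subspaceB Ic_sub IcG' IcG.
- exact: subspaceB H_sub HH' (subspaceD H_sub H1_in H2_in).
- by rewrite [X in X + _]addrACA -opprD addrACA -opprD -eq_sum addrACA subrr.
by move=> /subr0_eq -> /subr0_eq -> /subr0_eq ->.
Qed.

End DirectSum.

Section VectorCalculus.
Variable R : realFieldType.
Implicit Types (p : {mpoly R[3]}) (V : VF R).

Definition gradF p : VF R := [ffun i => p^`M(i)].

Lemma divF_is_linear : linear (@divF R).
Proof.
move=> c u v; rewrite /divF scaler_sumr -big_split /=.
by apply: eq_bigr => i _; rewrite !ffunE linearP.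
Qed.

HB.instance Definition _ :=
  GRing.isLinear.Build R (VF R) {mpoly R[3]} _ (@divF R) divF_is_linear.

Lemma curlF_is_linear : linear (@curlF R).
Proof.
move=> c u v; apply/ffunP => i; rewrite !ffunE /= !ffunE !linearP /=.
by rewrite scalerBr addrACA scalerN.
Qed.

HB.instance Definition _ :=
  GRing.isLinear.Build R (VF R) (VF R) _ (@curlF R) curlF_is_linear.

Lemma divF_grad p : divF (gradF p) = mlaplacian p.
Proof. by rewrite mlaplacianE; apply: eq_bigr => i _; rewrite ffunE. Qed.

Lemma curlF_grad p : curlF (gradF p) = 0.
Proof. by apply/ffunP => i; rewrite !ffunE /= !ffunE mderiv_comm subrr. Qed.

Lemma Pt_grad k p : p \is k.+1.-homog -> Pt k (gradF p).
Proof. by move=> p_homog i; rewrite ffunE; exact: dhomog_mderiv p_homog. Qed.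

Lemma dhomog_divF k V : Pt k V -> divF V \is k.-1.-homog.
Proof. by move=> V_homog; apply: rpred_sum => i _; exact: dhomog_mderiv (V_homog i). Qed.

Lemma is_subspace_Pt k : is_subspace (@Pt R k).
Proof.
split=> [i|a u v u_homog v_homog i]; rewrite !ffunE; first exact: dhomog0.
by rewrite rpredD // rpredZ.
Qed.

Lemma is_subspace_St k : is_subspace (@St R k).
Proof. exact: (@is_subspace_ker _ _ _ (@divF R) (is_subspace_Pt k)). Qed.

Lemma is_subspace_It k : is_subspace (@It R k).
Proof. exact: (@is_subspace_ker _ _ _ (@curlF R) (is_subspace_Pt k)). Qed.

Lemma Pt_sum_St_It k V : (0 < k)%N -> Pt k V ->
  exists s i, [/\ St k s, It k i & V = s + i].
Proof.
case: k => // k _ V_homog.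
have [phi phi_homog lap_phi] := mlaplacian_onto (dhomog_divF V_homog).
have grad_It : It k.+1 (gradF phi) := conj (Pt_grad phi_homog) (curlF_grad phi).
exists (V - gradF phi), (gradF phi); split=> //; last by rewrite subrK.
split; first exact: subspaceB (is_subspace_Pt _) V_homog grad_It.1.
by rewrite linearB /= divF_grad lap_phi subrr.
Qed.

Lemma Pt0_Ht0 V : Pt 0 V -> Ht 0 V.
Proof.
move=> V_homog; have dV0 i j : (V i)^`M(j) = 0 by exact: mderiv_dhomog0.
split; split=> //; first by rewrite /divF big1 // => i _; rewrite dV0.
by apply/ffunP => i; rewrite !ffunE /= !dV0 subrr.
Qed.

End VectorCalculus.

Theorem mainTheorem9 (R : realFieldType) :
  (forall (k : nat), (1 <= k)%N ->
   forall (Sst Ist : VF R -> Prop),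
     is_complement Sst (Ht k) (St k) ->
     is_complement Ist (Ht k) (It k) ->
     forall V : VF R, Pt k V ->
       exists F G H : VF R,
         [/\ Sst F, Ist G, Ht k H, V = F + G + H &
           forall F' G' H' : VF R, Sst F' -> Ist G' -> Ht k H' ->
             V = F' + G' + H' -> [/\ F' = F, G' = G & H' = H]])
  /\ (forall V : VF R, Pt 0 V <-> Ht 0 V).
Proof.
split=> [k k_gt0 Sst Ist Sst_compl Ist_compl V V_homog|V].
  have [s [i [Ss Ii ->]]] := Pt_sum_St_It k_gt0 V_homog.
  exact: (complement_sum3 (is_subspace_St R k) (is_subspace_It R k)
           Sst_compl Ist_compl Ss Ii (erefl _)).
by split=> [|[[]]//]; exact: Pt0_Ht0.
Qed.
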